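(* Let $C\in\mathbb{R}^{n\times n}$ be symmetric positive definite, let $F\in\mathbb{R}^{n\times n_p}$ with $n_p<n$ have full column rank, and let $\beta>\beta_\ell>0$. Set $\hat{C}=C+\beta FF^T$ and $\hat{C}_\ell=C+\beta_\ell FF^T$. For $\mathbf{b}\in\mathbb{R}^n$ consider the stationary iteration $$\mathbf{w}_{k+1}=\mathbf{w}_k+\frac{\beta_\ell}{\beta}\hat{C}_\ell^{-1}\left(\mathbf{b}-\hat{C}\mathbf{w}_k\right),\qquad k=0,1,2,\dots$$ Its iteration matrix $G=I-\frac{\beta_\ell}{\beta}\hat{C}_\ell^{-1}\hat{C}$ satisfies $G=\left(1-\frac{\beta_\ell}{\beta}\right)\hat{C}_\ell^{-1}C$ and has spectral radius exactly $1-\beta_\ell/\beta<1$. Consequently, for every $\mathbf{b}$ and every initial guess $\mathbf{w}_0$, the iterates $\mathbf{w}_k$ converge to the unique solution of $\hat{C}\mathbf{w}=\mathbf{b}$, with asymptotic convergence factor $1-\beta_\ell/\beta$ (i.e., rate $R=\log(1-\beta_\ell/\beta)$ in the paper's convention). *)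

From HB Require Import structures.
From mathcomp Require Import all_boot all_order all_algebra.
From mathcomp Require Import all_classical all_reals all_analysis.
From mathcomp.real_closed Require Import complex.
Set Implicit Arguments. Unset Strict Implicit. Unset Printing Implicit Defensive.
Import Order.TTheory GRing.Theory Num.Theory.
Import numFieldNormedType.Exports.
Local Open Scope ring_scope.

Definition spd (R : realFieldType) (n : nat) (C : 'M[R]_n) : Prop :=
  C^T = C /\ forall x : 'cV[R]_n, x != 0 -> 0 < (x^T *m C *m x) 0 0.

Definition ceigenvalue (R : rcfType) (n : nat) (A : 'M[R]_n) (l : R[i]) : bool :=
  eigenvalue (map_mx (real_complex R) A) l.

Definition is_spectral_radius (R : rcfType) (n : nat) (A : 'M[R]_n) (r : R) : Prop :=
  (exists l : R[i], ceigenvalue A l /\ `|l| = (r%:C)%C) /\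
  (forall l : R[i], ceigenvalue A l -> `|l| <= (r%:C)%C).

Fixpoint iterate (R : fieldType) (n : nat) (Ch Chl : 'M[R]_n) (ratio : R)
    (rhs w0 : 'cV[R]_n) (k : nat) : 'cV[R]_n :=
  match k with
  | 0 => w0
  | k'.+1 => let w := iterate Ch Chl ratio rhs w0 k' in
             w + ratio *: (invmx Chl *m (rhs - Ch *m w))
  end.

(* Everything is measured in the energy form <u, v>_B = u^T B v of the SPD
   matrix B = Chl.  Writing t = 1 - betal/beta, the iteration matrix is
   G = t Chl^{-1} C (lemma [iteration_matrix_factor]).  Since C <= Chl in the
   quadratic-form order, y = Chl^{-1} C v satisfies, by Cauchy-Schwarz for C,
   <y, y>_Chl = <y, v>_C <= <v, v>_C <= <v, v>_Chl, hence G shrinks the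
   Chl-energy by the factor t^2 ([energy_bound_inv_mul]).  An energy
   contraction bounds every complex eigenvalue (split an eigenvector into real
   and imaginary parts, [ceigenvalue_energy_bound]) and forces the coordinates
   of the iterates of G to decay geometrically ([energy_bound_cvg0]).  The
   bound t is attained on any nonzero v with F^T v = 0, which exists because
   rank F < n.  Finally the error w_k - w* of the iteration obeys
   e_{k+1} = G e_k ([iterate_error]), which gives convergence. *)
From HB Require Import structures.
From mathcomp Require Import all_boot all_order all_algebra.
From mathcomp Require Import all_classical all_reals all_analysis.
From mathcomp.real_closed Require Import complex.
From mathcomp Require Import ring lra.
Import Order.TTheory GRing.Theory Num.Theory.
Import numFieldNormedType.Exports.
Set Implicit Arguments. Unset Strict Implicit.
Local Open Scope classical_set_scope.
Local Open Scope ring_scope.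

Section EnergyForm.
Variables (R : realFieldType) (n : nat).
Implicit Types (A B : 'M[R]_n) (u v : 'cV[R]_n).

Definition qf A u v : R := (u^T *m A *m v) 0 0.

Lemma qfDl A u1 u2 v : qf A (u1 + u2) v = qf A u1 v + qf A u2 v.
Proof. by rewrite /qf linearD /= !mulmxDl mxE. Qed.

Lemma qfZl A s u v : qf A (s *: u) v = s * qf A u v.
Proof. by rewrite /qf linearZ /= -!scalemxAl mxE. Qed.

Lemma qfNl A u v : qf A (- u) v = - qf A u v.
Proof. by rewrite -scaleN1r qfZl mulN1r. Qed.

Lemma qfDr A u v1 v2 : qf A u (v1 + v2) = qf A u v1 + qf A u v2.
Proof. by rewrite /qf mulmxDr mxE. Qed.

Lemma qfZr A s u v : qf A u (s *: v) = s * qf A u v.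
Proof. by rewrite /qf -scalemxAr mxE. Qed.

Lemma qfNr A u v : qf A u (- v) = - qf A u v.
Proof. by rewrite -scaleN1r qfZr mulN1r. Qed.

Lemma qf0r A u : qf A u 0 = 0.
Proof. by rewrite /qf mulmx0 mxE. Qed.

Lemma qfDm A B u v : qf (A + B) u v = qf A u v + qf B u v.
Proof. by rewrite /qf mulmxDr mulmxDl mxE. Qed.

Lemma qfZm A s u v : qf (s *: A) u v = s * qf A u v.
Proof. by rewrite /qf -scalemxAr -scalemxAl mxE. Qed.

Lemma qfC A u v : A^T = A -> qf A u v = qf A v u.
Proof.
move=> symA; rewrite /qf -[in LHS](trmxK (u^T *m A *m v)) [in LHS]mxE.
by rewrite !trmx_mul trmxK symA mulmxA.
Qed.

(* Gram matrices F F^T are positive semidefinite: u^T F F^T u = |F^T u|^2. *)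
Lemma qf_gram_ge0 m (F : 'M[R]_(n, m)) u : 0 <= qf (F *m F^T) u u.
Proof.
rewrite /qf mulmxA -(mulmxA _ F^T) -[u^T *m F]trmxK trmx_mul trmxK mxE.
by apply: sumr_ge0 => j _; rewrite [X in X * _]mxE -expr2 sqr_ge0.
Qed.

Lemma qf_ge0 A u : spd A -> 0 <= qf A u u.
Proof.
case=> _ posA; have [->|u0] := eqVneq u 0; first by rewrite qf0r.
exact/ltW/posA.
Qed.

Lemma spd_add_gram A m (F : 'M[R]_(n, m)) s :
  spd A -> 0 <= s -> spd (A + s *: (F *m F^T)).
Proof.
case=> symA posA s_ge0; split.
  by rewrite linearD /= linearZ /= trmx_mul trmxK symA.
move=> x x0; rewrite -/(qf _ x x) qfDm qfZm.
by apply: (lt_le_trans (posA x x0)); rewrite lerDl mulr_ge0 ?qf_gram_ge0.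
Qed.

Lemma spd_unitmx A : spd A -> A \in unitmx.
Proof.
case=> _ posA; rewrite unitmxE unitfE; apply/negP => /det0P [v v0 vA].
have := posA v^T; rewrite trmx_eq0 => /(_ v0).
by rewrite trmxK vA mul0mx mxE ltxx.
Qed.

Lemma qf_cauchy_schwarz A u v : spd A -> qf A u v ^+ 2 <= qf A u u * qf A v v.
Proof.
move=> spdA; have [->|v0] := eqVneq v 0; first by rewrite !qf0r expr0n mulr0.
have vv_gt0 : 0 < qf A v v by apply: spdA.2.
set s := qf A u v / qf A v v.
have uv_def : qf A u v = s * qf A v v by rewrite /s mulfVK // gt_eqF.
have := qf_ge0 (u - s *: v) spdA.
rewrite qfDl !qfDr !qfNl !qfNr !qfZl !qfZr (qfC v u spdA.1) uv_def.
clearbody s; nra.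
Qed.

Lemma coord_qf B v (i : 'I_n) :
  spd B -> v i 0 = qf B (invmx B *m delta_mx i (0 : 'I_1)) v.
Proof.
move=> spdB; rewrite /qf trmx_mul trmx_inv spdB.1 trmx_delta.
by rewrite -(mulmxA _ (invmx B)) mulVmx ?spd_unitmx // mulmx1 -rowE mxE.
Qed.

End EnergyForm.

Section EnergyContraction.
Variables (R : realFieldType) (n : nat).
Implicit Types (A B M : 'M[R]_n).

Definition energy_bound B M (s : R) : Prop :=
  forall v, qf B (M *m v) (M *m v) <= s ^+ 2 * qf B v v.

(* If 0 < A <= B in the quadratic-form order, then y = B^{-1} A v satisfies
   <y, y>_B = <y, v>_A <= <v, v>_A <= <v, v>_B: B^{-1} A is a B-contraction. *)
Lemma energy_bound_inv_mul A B t :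
  spd A -> spd B -> (forall x, qf A x x <= qf B x x) ->
  energy_bound B (t *: (invmx B *m A)) t.
Proof.
move=> spdA spdB leAB v; rewrite -scalemxAl qfZl qfZr mulrA -expr2.
apply: ler_wpM2l; first exact: sqr_ge0.
set y := invmx B *m A *m v.
have By : B *m y = A *m v by rewrite /y -mulmxA mulKVmx ?spd_unitmx.
have yy_def : qf B y y = qf A y v by rewrite /qf -mulmxA By mulmxA.
have yy_le : qf B y y ^+ 2 <= qf B y y * qf A v v.
  rewrite [in X in X ^+ 2]yy_def.
  apply: le_trans (qf_cauchy_schwarz y v spdA) _.
  by rewrite ler_wpM2r ?qf_ge0.
apply: le_trans (leAB v).
have [->|yy_neq0] := eqVneq (qf B y y) 0; first exact: qf_ge0.
have yy_gt0 : 0 < qf B y y by rewrite lt_def yy_neq0 qf_ge0.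
by rewrite -(ler_pM2l yy_gt0) -expr2.
Qed.

End EnergyContraction.

Section LinearAlgebra.
Variables (K : fieldType) (n : nat).

Lemma eigenvalue_colP (g : 'M[K]_n) a :
  eigenvalue g a <-> exists2 v : 'cV_n, g *m v = a *: v & v != 0.
Proof.
have singular_col :
    \det (g - a%:M) == 0 <-> exists2 v : 'cV_n, g *m v = a *: v & v != 0.
  rewrite -det_tr; split=> [/det0P [w w0 wg]|[v gv v0]].
    exists w^T; last by rewrite trmx_eq0.
    have : (w *m (g - a%:M)^T)^T = 0 by rewrite wg trmx0.
    by rewrite trmx_mul trmxK mulmxBl mul_scalar_mx => /eqP; rewrite subr_eq0 => /eqP.
  apply/det0P; exists v^T; first by rewrite trmx_eq0.
  by rewrite -trmx_mul mulmxBl gv mul_scalar_mx subrr trmx0.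
rewrite -singular_col; split=> [/eigenvalueP [v gv v0]|/det0P [v v0 vg]].
  by apply/det0P; exists v => //; rewrite mulmxBr gv mul_mx_scalar subrr.
apply/eigenvalueP; exists v => //.
by move/eqP: vg; rewrite mulmxBr mul_mx_scalar subr_eq0 => /eqP.
Qed.

Lemma exists_trmx_kernel m (F : 'M[K]_(n, m)) :
  (\rank F < n)%N -> exists2 v : 'cV_n, v != 0 & F^T *m v = 0.
Proof.
move=> rankF; pose w := nz_row (kermx F).
have ker_nz : kermx F != 0.
  by rewrite -mxrank_eq0 mxrank_ker subn_eq0 -ltnNge.
have wF : w *m F = 0 by apply/sub_kermxP; exact: nz_row_sub.
exists w^T; first by rewrite trmx_eq0 nz_row_eq0.
by rewrite -trmx_mul wF trmx0.
Qed.

Lemma iteration_matrix_factor (C P : 'M[K]_n) beta betal :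
  beta != 0 -> C + betal *: P \in unitmx ->
  1%:M - (betal / beta) *: (invmx (C + betal *: P) *m (C + beta *: P)) =
  (1 - betal / beta) *: (invmx (C + betal *: P) *m C).
Proof.
move=> beta_neq0 unitChl; set Chl := C + betal *: P.
have Chl_G : Chl *m (1%:M - (betal / beta) *: (invmx Chl *m (C + beta *: P))) =
    (1 - betal / beta) *: C.
  rewrite mulmxBr mulmx1 -scalemxAr mulmxA mulmxV // mul1mx.
  by apply/matrixP => i j; rewrite !mxE; field.
by rewrite -[LHS](mulKmx unitChl) Chl_G scalemxAr.
Qed.

Lemma iterate_error (Ch Chl : 'M[K]_n) r b w0 wstar k : Ch *m wstar = b ->
  iterate Ch Chl r b w0 k.+1 - wstar =
  (1%:M - r *: (invmx Chl *m Ch)) *m (iterate Ch Chl r b w0 k - wstar).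
Proof.
move=> solved /=; set w := iterate Ch Chl r b w0 k.
have -> : b - Ch *m w = - (Ch *m (w - wstar)) by rewrite -solved mulmxBr opprB.
by rewrite mulmxBl mul1mx -scalemxAl -mulmxA mulmxN scalerN addrAC.
Qed.

End LinearAlgebra.

Section ComplexEigenvalues.
Variables (R : rcfType) (n : nat).
Local Notation Re := (@complex.Re R).
Local Notation Im := (@complex.Im R).

Lemma Re_real_mul (a : R) (z : R[i]) : Re ((a%:C)%C * z) = a * Re z.
Proof. by case: z => x y /=; rewrite mul0r subr0. Qed.

Lemma Im_real_mul (a : R) (z : R[i]) : Im ((a%:C)%C * z) = a * Im z.
Proof. by case: z => x y /=; rewrite mul0r addr0. Qed.

Lemma Re_mulmx (A : 'M[R]_n) (z : 'cV[R[i]]_n) :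
  map_mx Re (map_mx (real_complex R) A *m z) = A *m map_mx Re z.
Proof.
apply/matrixP => i j; rewrite !mxE raddf_sum.
by apply: eq_bigr => k _; rewrite !mxE; exact: Re_real_mul.
Qed.

Lemma Im_mulmx (A : 'M[R]_n) (z : 'cV[R[i]]_n) :
  map_mx Im (map_mx (real_complex R) A *m z) = A *m map_mx Im z.
Proof.
apply/matrixP => i j; rewrite !mxE raddf_sum.
by apply: eq_bigr => k _; rewrite !mxE; exact: Im_real_mul.
Qed.

Lemma ceigenvalue_real (M : 'M[R]_n) (v : 'cV[R]_n) a :
  M *m v = a *: v -> v != 0 -> ceigenvalue M (a%:C)%C.
Proof.
move=> Mv v0; apply/eigenvalue_colP; exists (map_mx (real_complex R) v).
  by rewrite -map_mxM Mv map_mxZ.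
by rewrite map_mx_eq0.
Qed.

(* A matrix shrinking the energy of an SPD matrix by s^2 has all its complex
   eigenvalues in the disc of radius s: for an eigenvector z = x + i y with
   eigenvalue a + i c, M acts on (x, y) as a rotation-dilation by |a + i c|,
   so the total energy of x and y is multiplied by a^2 + c^2 <= s^2. *)
Lemma ceigenvalue_energy_bound (B M : 'M[R]_n) s l :
  spd B -> 0 <= s -> energy_bound B M s -> ceigenvalue M l -> `|l| <= (s%:C)%C.
Proof.
move=> spdB s_ge0 boundM /eigenvalue_colP [z Mz z0].
set x := map_mx Re z; set y := map_mx Im z; set a := Re l; set c := Im l.
have Mx : M *m x = a *: x - c *: y.
  rewrite /x -Re_mulmx Mz; apply/matrixP => i j; rewrite !mxE.
  by rewrite /a /c; case: (l) (z i j) => ? ? [? ?].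
have My : M *m y = c *: x + a *: y.
  rewrite /y -Im_mulmx Mz; apply/matrixP => i j; rewrite !mxE.
  by rewrite /a /c; case: (l) (z i j) => ? ? [? ?] /=; rewrite addrC.
have xy_gt0 : 0 < qf B x x + qf B y y.
  have [x0|/spdB.2 xx_gt0] := eqVneq x 0; last by rewrite ltr_pwDl ?qf_ge0.
  have [y0|/spdB.2 yy_gt0] := eqVneq y 0; last by rewrite ltr_pwDr ?qf_ge0.
  case/negP: z0; apply/eqP/matrixP => i j.
  move: (congr1 (fun N : 'cV[R]_n => N i j) x0) (congr1 (fun N : 'cV[R]_n => N i j) y0).
  by rewrite !mxE; case: (z i j) => ? ? /= -> ->.
have energy_Mxy : qf B (M *m x) (M *m x) + qf B (M *m y) (M *m y) =
    (a ^+ 2 + c ^+ 2) * (qf B x x + qf B y y).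
  rewrite Mx My !(qfDl, qfDr, qfZl, qfZr, qfNl, qfNr) (qfC y x spdB.1); ring.
have : (a ^+ 2 + c ^+ 2) * (qf B x x + qf B y y) <= s ^+ 2 * (qf B x x + qf B y y).
  by rewrite -energy_Mxy mulrDr lerD.
rewrite ler_pM2r // => ac_le.
rewrite normc_def lecR -(ger0_norm s_ge0) -sqrtr_sqr.
exact: ler_wsqrtr.
Qed.

End ComplexEigenvalues.

Section EnergyConvergence.
Variables (R : realType) (n : nat).

(* Iterates of an energy contraction with factor s < 1 tend to zero
   coordinatewise: their energy decays like s^(2k), and each coordinate is
   bounded through Cauchy-Schwarz by a constant times the square root of
   the energy. *)
Lemma energy_bound_cvg0 (B M : 'M[R]_n) s (e : nat -> 'cV[R]_n) (i : 'I_n) :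
  spd B -> 0 <= s -> s < 1 -> energy_bound B M s ->
  (forall k, e k.+1 = M *m e k) ->
  (fun k => e k i 0) @ \oo --> 0.
Proof.
move=> spdB s_ge0 s_lt1 boundM e_rec.
have energy_decay k : qf B (e k) (e k) <= (s ^+ 2) ^+ k * qf B (e 0) (e 0).
  elim: k => [|k IHk]; first by rewrite expr0 mul1r.
  rewrite e_rec exprS -mulrA; apply: le_trans (boundM _) _.
  by rewrite ler_wpM2l ?sqr_ge0.
set u := invmx B *m delta_mx i (0 : 'I_1).
set c := Num.sqrt (qf B u u * qf B (e 0) (e 0)).
have coord_bound k : `|e k i 0| <= c * s ^+ k.
  have coord_sqr : e k i 0 ^+ 2 <= qf B u u * qf B (e 0) (e 0) * (s ^+ k) ^+ 2.
    rewrite (coord_qf _ _ spdB); apply: le_trans (qf_cauchy_schwarz u (e k) spdB) _.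
    by rewrite -mulrA ler_wpM2l ?qf_ge0 // mulrC -exprM mulnC exprM.
  rewrite -sqrtr_sqr; apply: le_trans (ler_wsqrtr coord_sqr) _.
  by rewrite sqrtrM ?mulr_ge0 ?qf_ge0 // sqrtr_sqr ger0_norm ?exprn_ge0.
have geometric_cvg0 : (fun k => c * s ^+ k) @ \oo --> 0.
  by apply: cvg_geometric; rewrite ger0_norm.
apply: (@squeeze_cvgr _ _ _ _ (fun k => - (c * s ^+ k)) (fun k => c * s ^+ k)).
- by apply: nearW => k; rewrite -ler_norml coord_bound.
- by rewrite -oppr0; apply: cvgN.
- exact: geometric_cvg0.
Qed.

End EnergyConvergence.

Theorem lemma3p2 (R : realType) (n np : nat) (C : 'M[R]_n) (F : 'M[R]_(n, np))
    (beta betal : R) :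
  (np < n)%N -> spd C -> \rank F = np -> 0 < betal -> betal < beta ->
  let Ch := C + beta *: (F *m F^T) in
  let Chl := C + betal *: (F *m F^T) in
  let G := 1%:M - (betal / beta) *: (invmx Chl *m Ch) in
  G = (1 - betal / beta) *: (invmx Chl *m C) /\
  is_spectral_radius G (1 - betal / beta) /\
  1 - betal / beta < 1 /\
  forall b : 'cV[R]_n,
    exists2 wstar : 'cV[R]_n,
      Ch *m wstar = b /\ (forall w : 'cV[R]_n, Ch *m w = b -> w = wstar) &
      forall w0 : 'cV[R]_n, forall i : 'I_n,
        (fun k : nat => iterate Ch Chl (betal / beta) b w0 k i 0 : R) @ \oo --> (wstar i 0 : R).
Proof.
move=> np_lt_n spdC rankF betal_gt0 betal_lt_beta Ch Chl G.
have beta_gt0 : 0 < beta := lt_trans betal_gt0 betal_lt_beta.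
have ratio_gt0 : 0 < betal / beta by rewrite divr_gt0.
have ratio_lt1 : betal / beta < 1 by rewrite ltr_pdivrMr // mul1r.
set t := 1 - betal / beta.
have t_ge0 : 0 <= t by rewrite subr_ge0 ltW.
have t_lt1 : t < 1 by rewrite ltrBlDr ltrDl.
have spdChl : spd Chl by apply: spd_add_gram; rewrite ?ltW.
have spdCh : spd Ch by apply: spd_add_gram; rewrite ?ltW.
have G_factor : G = t *: (invmx Chl *m C).
  by rewrite /G /Chl iteration_matrix_factor ?gt_eqF ?spd_unitmx.
have boundG : energy_bound Chl G t.
  rewrite G_factor; apply: energy_bound_inv_mul => // x.
  by rewrite qfDm qfZm lerDl mulr_ge0 ?qf_gram_ge0 ?ltW.
split=> //; split; [split|split=> // b].
- have [v v0 Fv] : exists2 v : 'cV[R]_n, v != 0 & F^T *m v = 0.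
    by apply: exists_trmx_kernel; rewrite rankF.
  exists (t%:C)%C; split; last by rewrite ger0_norm ?ler0c.
  have Chl_v : Chl *m v = C *m v.
    by rewrite mulmxDl -scalemxAl -mulmxA Fv mulmx0 scaler0 addr0.
  apply: (ceigenvalue_real _ v0).
  by rewrite G_factor -scalemxAl -mulmxA -Chl_v mulKmx ?spd_unitmx.
- move=> l; exact: ceigenvalue_energy_bound spdChl t_ge0 boundG.
exists (invmx Ch *m b).
  by split=> [|w <-]; rewrite ?mulKVmx ?mulKmx ?spd_unitmx.
move=> w0 i; apply/subr_cvg0.
have error_rec k : iterate Ch Chl (betal / beta) b w0 k.+1 - invmx Ch *m b =
    G *m (iterate Ch Chl (betal / beta) b w0 k - invmx Ch *m b).
  by apply: iterate_error; rewrite mulKVmx ?spd_unitmx.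
apply: cvg_trans (energy_bound_cvg0 i spdChl t_ge0 t_lt1 boundG error_rec).
by apply: near_eq_cvg; apply: nearW => k; rewrite !mxE.
Qed.
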